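(* Let $k$ be a field of characteristic $p>0$ and let $d_1,\ldots,d_{n+1}$ be positive integers. If the algebra $k[x_1,\ldots,x_{n+1}]/(x_1^{d_1}, \ldots, x_{n+1}^{d_{n+1}})$ has the weak Lefschetz property, then there exist forms $f_1,\ldots,f_{n+1}\in R=k[x_1,\ldots,x_n]$ of degrees $d_1,\ldots,d_{n+1}$ such that \[(R/(f_1,\ldots,f_{n+1}))(t) = \left[\frac{\prod_{i=1}^{n+1}(1-t^{d_i})}{(1-t)^n} \right].\]
   Context: For a graded algebra $C=\bigoplus_{i\ge 0}C_i$ over $k$ with finite-dimensional components, $C(t)=\sum_{i\ge0}\dim_k(C_i)t^i$ is its Hilbert series. For a power series $\sum_{i\ge 0}a_it^i$ with integer coefficients, $[\sum_{i\ge0} a_i t^i]$ denotes its truncation at the first negative coefficient, i.e. $\sum_{i<i_0}a_it^i$ where $i_0$ is the least index with $a_{i_0}<0$ (the whole series if there is none). A graded artinian algebra $A$ has the weak Lefschetz property if there is a linear form $\ell\in A_1$ such that for every $i$ the map $A_i\to A_{i+1}$, $a\mapsto \ell a$, is injective or surjective. *)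

From HB Require Import structures.
From mathcomp Require Import all_boot all_order all_algebra.
From mathcomp Require Import mpoly.
Set Implicit Arguments. Unset Strict Implicit. Unset Printing Implicit Defensive.
Import Order.TTheory GRing.Theory Num.Theory.
Local Open Scope ring_scope.

Definition in_ideal (k : fieldType) (n m : nat) (f : 'I_m -> {mpoly k[n]})
  (h : {mpoly k[n]}) : Prop :=
  exists g : 'I_m -> {mpoly k[n]}, h = \sum_(j < m) g j * f j.

(* [is_basis_mod f i b] : the degree-i forms b_0,...,b_{r-1} induce a k-basis
   of the degree-i component (R/(f))_i of the graded algebra R/(f),
   R = k[x_1..x_n] (the ideal (f) is generated by forms). *)
Definition is_basis_mod (k : fieldType) (n m : nat) (f : 'I_m -> {mpoly k[n]})
  (i r : nat) (b : 'I_r -> {mpoly k[n]}) : Prop :=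
  [/\ (forall j, b j \is i.-homog),
      (forall c : 'I_r -> k,
          in_ideal f (\sum_(j < r) c j *: b j) -> forall j, c j = 0) &
      (forall h : {mpoly k[n]}, h \is i.-homog ->
          exists c : 'I_r -> k, in_ideal f (h - \sum_(j < r) c j *: b j))].

(* dim_k (R/(f))_i = r *)
Definition hilb_fun_is (k : fieldType) (n m : nat) (f : 'I_m -> {mpoly k[n]})
  (i r : nat) : Prop :=
  exists b : 'I_r -> {mpoly k[n]}, is_basis_mod f i b.

(* Weak Lefschetz property of A = k[x_1..x_N]/(f): there is a linear form
   l in A_1 (represented by a linear form of the polynomial ring) such that,
   for every i, multiplication by l, A_i -> A_{i+1}, is injective or surjective. *)
Definition has_WLP (k : fieldType) (N m : nat) (f : 'I_m -> {mpoly k[N]}) : Prop :=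
  exists l : {mpoly k[N]}, l \is 1.-homog /\
    forall i : nat,
      (forall g : {mpoly k[N]}, g \is i.-homog ->
          in_ideal f (l * g) -> in_ideal f g)
      \/
      (forall h : {mpoly k[N]}, h \is i.+1.-homog ->
          exists g : {mpoly k[N]}, g \is i.-homog /\ in_ideal f (h - l * g)).

Definition monomial_ci (k : fieldType) (N : nat) (d : 'I_N -> nat) :
  'I_N -> {mpoly k[N]} := fun j => 'X_j ^+ d j.

(* Coefficient of t^i in  prod_j (1 - t^{d_j}) / (1 - t)^n  (an integer).
   The coefficient of t^e in 1/(1-t)^n is 'C(e + n - 1, e)
   (this also gives [e == 0] when n = 0, by truncated subtraction). *)
Definition num_poly (N : nat) (d : 'I_N -> nat) : {poly int} :=
  \prod_(j < N) (1 - 'X ^+ d j).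

Definition ratio_coef (n N : nat) (d : 'I_N -> nat) (i : nat) : int :=
  \sum_(j < i.+1) (num_poly d)`_j * ('C((i - j) + n - 1, i - j))%:Z.

(* Coefficient of t^i in the truncation [ sum_i a_i t^i ] at the first
   negative coefficient. *)
Definition trunc_coef (a : nat -> int) (i : nat) : int :=
  if [forall j : 'I_i.+1, 0 <= a j] then a i else 0.

(* Let A = k[x_0..x_n]/(x_j^(d_j)) and let l be a Lefschetz form. Solving
   l = 0 for a variable with nonzero coefficient identifies A/lA with R/(f),
   where R has one variable fewer and f_j, the image of x_j^(d_j), is a form of
   degree d_j. Hence dim (R/(f))_(i+1) = dim A_(i+1) - rank (l : A_i -> A_(i+1)),
   which is computed on the basis of standard monomials. Since
   A(t) = prod_j (1 - t^(d_j)) / (1 - t)^(n+1), the differences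
   dim A_(i+1) - dim A_i are the coefficients of prod_j (1 - t^(d_j)) / (1 - t)^n.
   By the weak Lefschetz property the rank is dim A_i as long as these
   differences are nonnegative, and dim A_(i+1) from the first negative one on,
   since surjectivity of multiplication by l propagates to higher degrees. *)

From HB Require Import structures.
From mathcomp Require Import all_boot all_order all_algebra.
From mathcomp Require Import mpoly zify.
Set Implicit Arguments. Unset Strict Implicit. Unset Printing Implicit Defensive.
Import Order.TTheory GRing.Theory Num.Theory.
Local Open Scope ring_scope.

Section IdealClosure.
Variables (k : fieldType) (n m : nat) (f : 'I_m -> {mpoly k[n]}).
Local Notation J := (in_ideal f).

Lemma in_ideal0 : J 0.
Proof. by exists (fun _ => 0); rewrite big1 // => j _; rewrite mul0r. Qed.

Lemma in_idealD u v : J u -> J v -> J (u + v).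
Proof.
move=> [g ->] [h ->]; exists (fun j => g j + h j).
by rewrite -big_split; apply: eq_bigr => j _; rewrite mulrDl.
Qed.

Lemma in_idealMl p u : J u -> J (p * u).
Proof.
move=> [g ->]; exists (fun j => p * g j).
by rewrite mulr_sumr; apply: eq_bigr => j _; rewrite mulrA.
Qed.

Lemma in_idealZ c u : J u -> J (c *: u).
Proof. by rewrite -mul_mpolyC; apply: in_idealMl. Qed.

Lemma in_idealN u : J u -> J (- u).
Proof. by rewrite -scaleN1r; apply: in_idealZ. Qed.

Lemma in_ideal_sum (T : Type) (s : seq T) (P : pred T) (F : T -> {mpoly k[n]}) :
  (forall x, P x -> J (F x)) -> J (\sum_(x <- s | P x) F x).
Proof. by move=> h; elim/big_ind: _ => //; [exact: in_ideal0 | exact: in_idealD]. Qed.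

Lemma in_ideal_gen j : J (f j).
Proof.
exists (fun i => (i == j)%:R); rewrite (bigD1 j) //= eqxx mul1r big1 ?addr0 //.
by move=> i /negbTE ->; rewrite mul0r.
Qed.

Lemma in_ideal_prodB (I : finType) (F G : I -> {mpoly k[n]}) :
  (forall i, J (F i - G i)) -> J (\prod_i F i - \prod_i G i).
Proof.
move=> h; apply: (big_rec2 (fun x y => J (x - y))); first by rewrite subrr; apply: in_ideal0.
move=> i x y _ hxy.
have -> : F i * x - G i * y = F i * (x - y) + y * (F i - G i).
  by rewrite mulrBr mulrBr (mulrC y) addrA subrK (mulrC y).
by apply: in_idealD; apply: in_idealMl.
Qed.

Lemma in_ideal_expB a b e : J (a - b) -> J (a ^+ e - b ^+ e).
Proof.
by move=> hab; rewrite -[e]card_ord -!prodr_const; apply: in_ideal_prodB.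
Qed.

Lemma in_ideal_compB (v : {mpoly k[n]}) (t : n.-tuple {mpoly k[n]}) :
  (forall j, J (tnth t j - 'X_j)) -> J (v \mPo t - v).
Proof.
move=> ht; rewrite comp_mpolyE [X in _ - X](mpolyE v) -sumrB.
apply: in_ideal_sum => a _; rewrite -scalerBr; apply: in_idealZ.
by rewrite mpolyXE_id; apply: in_ideal_prodB => j; apply: in_ideal_expB.
Qed.

End IdealClosure.

Section MPolyFacts.
Variable R : comNzRingType.

Lemma dhomogXU n (j : 'I_n) : ('X_j : {mpoly R[n]}) \is 1.-homog.
Proof. by rewrite dhomogX; apply/eqP; apply: mdeg1. Qed.

Lemma mcoeffMX_if n (p : {mpoly R[n]}) e a :
  (p * 'X_[e])@_a = if (e <= a)%MM then p@_(a - e)%MM else 0.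
Proof.
case: ifP => hle; first by rewrite -{1}(submK hle) addmC mcoeffMX.
apply/eqP; rewrite mcoeff_eq0; apply/negP => hin.
have := perm_mem (msuppMX p e) a; rewrite hin => /esym/mapP [a' _ ha].
by move: hle; rewrite ha lem_addr.
Qed.

Lemma dhomog1E n (l : {mpoly R[n]}) : l \is 1.-homog ->
  l = \sum_(j < n) l@_U_(j) *: 'X_j.
Proof.
move=> hl; apply/mpolyP => a; rewrite raddf_sum /=.
case: (boolP (mdeg a == 1%N)) => [/mdeg1P [j /eqP ->] | ha].
  rewrite (bigD1 j) //= mcoeffZ mcoeffX eqxx mulr1 big1 ?addr0 //.
  by move=> i hi; rewrite mcoeffZ mcoeffX eq_mnm1 (negbTE hi) mulr0.
rewrite (dhomog_nemf_coeff hl ha) big1 // => i _.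
rewrite mcoeffZ mcoeffX; case: eqP => [he|]; last by rewrite mulr0.
by move: ha; rewrite -he mdeg1.
Qed.

Lemma mcoeff_dhomog1M n (l g : {mpoly R[n]}) a : l \is 1.-homog ->
  (l * g)@_a = \sum_(j < n) l@_U_(j) * (if (0 < a j)%N then g@_(a - U_(j))%MM else 0).
Proof.
move=> hl; rewrite {1}(dhomog1E hl) mulr_suml raddf_sum /=.
apply: eq_bigr => j _; rewrite -scalerAl mcoeffZ (mulrC _ g) mcoeffMX_if lep1mP.
by rewrite lt0n.
Qed.

Lemma comp_mpolyXt n1 n2 (t : n1.-tuple {mpoly R[n2]}) i : 'X_i \mPo t = tnth t i.
Proof. by rewrite comp_mpolyXU (tnth_nth 0). Qed.

Lemma comp_mpoly_sum n1 n2 (t : n1.-tuple {mpoly R[n2]}) (I : finType)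
  (F : I -> {mpoly R[n1]}) : (\sum_i F i) \mPo t = \sum_i (F i \mPo t).
Proof. exact: (big_morph _ (comp_mpolyD t) (comp_mpoly0 t)). Qed.

Lemma comp_mpolyA n1 n2 n3 (p : {mpoly R[n1]}) (t1 : n1.-tuple {mpoly R[n2]})
  (t2 : n2.-tuple {mpoly R[n3]}) :
  (p \mPo t1) \mPo t2 = p \mPo [tuple tnth t1 i \mPo t2 | i < n1].
Proof.
rewrite (comp_mpolyEX p t1) (comp_mpolyEX p) raddf_sum /=; apply: eq_bigr => a _.
rewrite comp_mpolyZ !comp_mpolyX rmorph_prod /=; congr (_ *: _).
by apply: eq_bigr => i _; rewrite rmorphXn tnth_mktuple.
Qed.

Lemma dhomog_bigprod n (I : finType) (F : I -> {mpoly R[n]}) (e : I -> nat) :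
  (forall i, F i \is (e i).-homog) -> \prod_i F i \is (\sum_i e i)%N.-homog.
Proof.
move=> h; apply: (big_rec2 (fun (x : nat) (y : {mpoly R[n]}) => y \is x.-homog)).
  exact: dhomog1.
by move=> i x y _ hy; apply: dhomogM.
Qed.

Lemma comp_dhomog n1 n2 (p : {mpoly R[n1]}) (t : n1.-tuple {mpoly R[n2]}) e :
  p \is e.-homog -> (forall j, tnth t j \is 1.-homog) -> p \mPo t \is e.-homog.
Proof.
move=> hp ht; rewrite comp_mpolyE big_seq; apply: rpred_sum => a ha; apply: rpredZ.
have -> : e = (\sum_i 1 * a i)%N.
  by rewrite -(dhomog_mf hp ha) /= mdegE; apply: eq_bigr => i _; rewrite mul1n.
by apply: dhomog_bigprod => i; apply: dhomogMn.
Qed.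

End MPolyFacts.

Section StandardMonomials.
Variables (k : fieldType) (N : nat) (d : 'I_N -> nat).
Local Notation S := {mpoly k[N]}.
Local Notation I := (monomial_ci k d).

Definition standard (a : 'X_{1..N}) := [forall j, a j < d j]%N.

Definition exp_bound := (\sum_j d j)%N.
Definition bexp := {ffun 'I_N -> 'I_exp_bound.+1}.
Definition mnm_of_bexp (f : bexp) : 'X_{1..N} := [multinom (f j : nat) | j < N].
Definition std_set i : {set bexp} :=
  [set f : bexp | standard (mnm_of_bexp f) && (mdeg (mnm_of_bexp f) == i)].
Definition nstd i := #|std_set i|.
Definition std_mnm i (s : 'I_(nstd i)) : 'X_{1..N} := mnm_of_bexp (enum_val s).

(* The standard monomials of degree [i] are a basis of the degree-[i] part
   of [k[x]/(x_j^(d j))]. *)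
Definition std_coords i (u : S) : 'rV[k]_(nstd i) := \row_s u@_(std_mnm s).
Definition std_poly i (w : 'rV[k]_(nstd i)) : S := \sum_s w 0 s *: 'X_[std_mnm s].

Lemma std_mnmP i s : standard (@std_mnm i s) /\ mdeg (std_mnm s) = i.
Proof. by have := enum_valP s; rewrite inE => /andP [-> /eqP]. Qed.

Lemma mnm_of_bexp_inj : injective mnm_of_bexp.
Proof.
move=> f g /mnmP h; apply/ffunP => j; apply: val_inj.
by have := h j; rewrite !mnmE.
Qed.

Lemma std_mnm_inj i : injective (@std_mnm i).
Proof. by move=> s t /mnm_of_bexp_inj /enum_val_inj. Qed.

Lemma std_mnm_onto i a : standard a -> mdeg a = i -> exists s, @std_mnm i s = a.
Proof.
move=> sa da.
have hb j : (a j < exp_bound.+1)%N.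
  have hj : (a j < d j)%N by move/forallP: sa.
  have hdj : (d j <= exp_bound)%N by rewrite /exp_bound (bigD1 j) //= leq_addr.
  by rewrite ltnS (leq_trans (ltnW hj) hdj).
pose f : bexp := [ffun j => Ordinal (hb j)].
have mf : mnm_of_bexp f = a by apply/mnmP => j; rewrite mnmE ffunE.
have fM : f \in std_set i by rewrite inE mf sa da /=.
by exists (enum_rank_in fM f); rewrite /std_mnm enum_rankK_in.
Qed.

Lemma sum_std_mnm i (V : zmodType) (G : 'X_{1..N} -> V) a :
  \sum_(s < nstd i) (if @std_mnm i s == a then G (std_mnm s) else 0) =
  if standard a && (mdeg a == i) then G a else 0.
Proof.
case: ifP => [/andP [sa /eqP da] | hn].
  have [s0 hs0] := std_mnm_onto sa da.
  rewrite (bigD1 s0) //= hs0 eqxx big1 ?addr0 // => t ht.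
  by rewrite -hs0 (inj_eq (@std_mnm_inj i)) (negbTE ht).
rewrite big1 // => t _; case: eqP => // he.
by have [s1 s2] := std_mnmP t; move: hn; rewrite -he s1 s2 eqxx.
Qed.

Lemma std_polyK i : cancel (@std_poly i) (std_coords i).
Proof.
move=> w; apply/rowP => s; rewrite mxE /std_poly raddf_sum /=.
rewrite (bigD1 s) //= mcoeffZ mcoeffX eqxx mulr1 big1 ?addr0 //.
by move=> t ht; rewrite mcoeffZ mcoeffX (inj_eq (@std_mnm_inj i)) (negbTE ht) mulr0.
Qed.

Lemma dhomog_std_poly i (w : 'rV[k]_(nstd i)) : std_poly w \is i.-homog.
Proof.
apply: rpred_sum => s _; apply: rpredZ; rewrite dhomogX.
by apply/eqP; case: (std_mnmP s).
Qed.

Lemma std_coordsD i u v : std_coords i (u + v) = std_coords i u + std_coords i v.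
Proof. by apply/rowP => s; rewrite !mxE mcoeffD. Qed.

Lemma std_coordsZ i c u : std_coords i (c *: u) = c *: std_coords i u.
Proof. by apply/rowP => s; rewrite !mxE mcoeffZ. Qed.

Lemma std_coordsB i u v : std_coords i (u - v) = std_coords i u - std_coords i v.
Proof. by apply/rowP => s; rewrite !mxE mcoeffB. Qed.

Lemma std_polyD i v w : std_poly (v + w) = std_poly v + @std_poly i w.
Proof.
by rewrite /std_poly -big_split; apply: eq_bigr => s _; rewrite mxE scalerDl.
Qed.

Lemma std_polyZ i c w : std_poly (c *: w) = c *: @std_poly i w.
Proof.
by rewrite /std_poly scaler_sumr; apply: eq_bigr => s _; rewrite mxE scalerA.
Qed.

Lemma std_poly0 i : @std_poly i 0 = 0.
Proof. by rewrite /std_poly big1 // => s _; rewrite mxE scale0r. Qed.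

Lemma mcoeff_in_ideal_std u a : in_ideal I u -> standard a -> u@_a = 0.
Proof.
move=> [g ->] sa; rewrite raddf_sum /= big1 // => j _.
rewrite /monomial_ci mpolyXn mcoeffMX_if; case: ifP => // /mnm_lepP /(_ j).
by rewrite mulmnE mnm1E eqxx mul1n leqNgt; move/forallP: sa => /(_ j) ->.
Qed.

Lemma std_coords_in_ideal i u : in_ideal I u -> std_coords i u = 0.
Proof.
move=> hu; apply/rowP => s; rewrite !mxE.
by apply: mcoeff_in_ideal_std => //; case: (std_mnmP s).
Qed.

Lemma in_ideal_subX_std i a :
  mdeg a = i -> in_ideal I ('X_[a] - std_poly (std_coords i 'X_[a])).
Proof.
move=> da; case: (boolP (standard a)) => sa.
  suff -> : std_poly (std_coords i 'X_[a]) = 'X_[a] by rewrite subrr; apply: in_ideal0.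
  rewrite /std_poly (eq_bigr (fun s => if @std_mnm i s == a then 'X_[std_mnm s] else 0)).
    by rewrite sum_std_mnm sa da eqxx.
  by move=> s _; rewrite mxE mcoeffX eq_sym; case: eqP => _; rewrite ?scale1r ?scale0r.
have -> : std_coords i 'X_[a] = 0.
  apply/rowP => s; rewrite !mxE mcoeffX; case: eqP => // he.
  by case: (std_mnmP s); rewrite -he (negbTE sa).
rewrite std_poly0 subr0.
move/forallPn: sa => [j hj]; rewrite -leqNgt in hj.
have le : (U_(j) *+ d j <= a)%MM.
  apply/mnm_lepP => t; rewrite mulmnE mnm1E.
  by case: eqP => [<-|]; rewrite ?mul1n ?mul0n.
rewrite -(submK le) mpolyXD; apply: in_idealMl.
by rewrite -mpolyXn; apply: (in_ideal_gen I j).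
Qed.

Lemma in_ideal_sub_std i h :
  h \is i.-homog -> in_ideal I (h - std_poly (std_coords i h)).
Proof.
move=> hh.
have pcD : {morph (fun u => @std_poly i (std_coords i u)) : x y / x + y >-> x + y}.
  by move=> x y /=; rewrite std_coordsD std_polyD.
have pc0 : @std_poly i (std_coords i 0) = 0.
  by rewrite std_coords_in_ideal ?std_poly0 //; apply: in_ideal0.
rewrite {1 2}(mpolyE h) (big_morph _ pcD pc0) -sumrB big_seq.
apply: in_ideal_sum => a ha.
rewrite std_coordsZ std_polyZ -scalerBr; apply: in_idealZ; apply: in_ideal_subX_std.
exact: (dhomog_mf hh ha).
Qed.

End StandardMonomials.

Section LinearFormMultiplication.
Variables (k : fieldType) (N : nat) (d : 'I_N -> nat) (l : {mpoly k[N]}).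
Local Notation S := {mpoly k[N]}.
Local Notation I := (monomial_ci k d).
Local Notation nstd := (nstd d).
Local Notation std_mnm := (@std_mnm N d).

Definition lmul_mx i : 'M[k]_(nstd i, nstd i.+1) :=
  \matrix_(t, s) \sum_(j < N) l@_U_(j) * (((std_mnm t + U_(j))%MM == std_mnm s)%:R).

Definition in_ideal_adjoin (u : S) := exists g, in_ideal I (u - l * g).

Definition lmul_inj i :=
  forall g : S, g \is i.-homog -> in_ideal I (l * g) -> in_ideal I g.
Definition lmul_hits i (h : S) :=
  exists g : S, g \is i.-homog /\ in_ideal I (h - l * g).
Definition lmul_surj i := forall h : S, h \is i.+1.-homog -> lmul_hits i h.

Lemma quotient_basis i p (L : 'M[k]_(p, nstd i)) :
  (forall g, (std_coords d i (l * g) <= L)%MS) ->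
  (forall w : 'rV_p, in_ideal_adjoin (std_poly (w *m L))) ->
  let B := row_base (L^C)%MS in
  (forall c : 'rV_(\rank (L^C)%MS), in_ideal_adjoin (std_poly (c *m B)) -> c = 0) /\
  (forall h, h \is i.-homog ->
     exists c : 'rV_(\rank (L^C)%MS), in_ideal_adjoin (h - std_poly (c *m B))).
Proof.
move=> hL hW B; split.
  move=> c [g hg]; have := std_coords_in_ideal i hg.
  rewrite std_coordsB std_polyK => /eqP; rewrite subr_eq0 => /eqP hc.
  have : (c *m B <= L :&: L^C)%MS.
    rewrite sub_capmx; apply/andP; split; first by rewrite hc hL.
    by apply: submx_trans (submxMl c B) _; rewrite eq_row_base submx_refl.
  rewrite capmx_compl submx0 => /eqP hc0.
  by apply: (row_free_inj (row_base_free (L^C)%MS)); rewrite hc0 mul0mx.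
move=> h hh; have hr := in_ideal_sub_std d hh.
have : (std_coords d i h <= L + L^C)%MS by apply/submx_full/addsmx_compl_full.
move=> /sub_addsmxP [[u1 u2] /= hv].
have hB : (u2 *m (L^C)%MS <= B)%MS by rewrite eq_row_base; apply: submxMl.
exists (u2 *m (L^C)%MS *m pinvmx B); rewrite (mulmxKpV hB).
have [g hg] := hW u1; exists g.
have -> : h - std_poly (u2 *m (L^C)%MS) - l * g =
   (h - std_poly (std_coords d i h)) + (std_poly (u1 *m L) - l * g).
  by rewrite hv std_polyD !opprD !addrA; congr (_ - _); rewrite addrAC subrK.
exact: in_idealD.
Qed.

Hypothesis hl : l \is 1.-homog.

Lemma dhomog_lmul i g : g \is i.-homog -> l * g \is i.+1.-homog.
Proof. by move=> hg; have := dhomogM hl hg; rewrite add1n. Qed.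

Lemma std_coords_lmul i g : std_coords d i.+1 (l * g) = std_coords d i g *m lmul_mx i.
Proof.
apply/rowP => s; rewrite !mxE mcoeff_dhomog1M //.
under [RHS]eq_bigr do rewrite !mxE mulr_sumr.
rewrite exchange_big /=; apply: eq_bigr => j _.
set a := std_mnm s.
under eq_bigr do rewrite mulrCA.
rewrite -mulr_sumr; congr (_ * _).
have [sa da] := std_mnmP s.
case: (posnP (a j)) => [a0|apos].
  rewrite big1 // => t _; case: eqP => [he|]; last by rewrite !mulr0.
  by move: a0; rewrite -he mnmDE mnm1E eqxx addn1.
have le : (U_(j) <= a)%MM by rewrite lep1mP -lt0n.
rewrite (eq_bigr (fun t => if std_mnm t == (a - U_(j))%MM then g@_(std_mnm t) else 0)).
  rewrite (sum_std_mnm d i (fun b => g@_b)).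
  suff -> : standard d (a - U_(j))%MM && (mdeg (a - U_(j))%MM == i) by [].
  apply/andP; split.
    apply/forallP => t; rewrite mnmBE; apply: leq_ltn_trans (leq_subr _ _) _.
    by move/forallP: sa.
  by have := congr1 mdeg (submK le); rewrite mdegD mdeg1 da addn1 => -[->].
move=> t _; have -> : ((std_mnm t + U_(j))%MM == a) = (std_mnm t == (a - U_(j))%MM).
  by apply/eqP/eqP => [<-|->]; [rewrite addmK | rewrite submK].
by case: eqP => _; rewrite ?mulr1 ?mulr0.
Qed.

Lemma lmul_mx_image i :
  (forall g, (std_coords d i.+1 (l * g) <= lmul_mx i)%MS) /\
  (forall w : 'rV_(nstd i), in_ideal_adjoin (std_poly (w *m lmul_mx i))).
Proof.
split=> [g|w]; first by rewrite std_coords_lmul; apply: submxMl.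
exists (std_poly w).
have := in_ideal_sub_std d (dhomog_lmul (dhomog_std_poly w)).
by rewrite std_coords_lmul std_polyK => /in_idealN; rewrite opprB.
Qed.

Lemma lmul_image_deg0 :
  (forall g, (std_coords d 0 (l * g) <= (0 : 'M[k]_(0, nstd 0)))%MS) /\
  (forall w : 'rV_0, in_ideal_adjoin (std_poly (w *m (0 : 'M[k]_(0, nstd 0))))).
Proof.
split=> [g|w]; last first.
  by exists 0; rewrite mulmx0 std_poly0 mulr0 subr0; apply: in_ideal0.
suff -> : std_coords d 0 (l * g) = 0 by apply: sub0mx.
apply/rowP => s; rewrite !mxE mcoeff_dhomog1M // big1 // => j _.
have [_ da] := std_mnmP s.
case: ifP => [hp|]; last by rewrite mulr0.
move: da; rewrite mdegE => /eqP; rewrite sum_nat_eq0 => /forallP /(_ j) /eqP h0.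
by rewrite h0 in hp.
Qed.

Lemma lmul_inj_rank i : lmul_inj i -> \rank (lmul_mx i) = nstd i.
Proof.
move=> hi; apply/eqP; rewrite -/(row_free _) -kermx_eq0; apply/eqP.
apply/row_matrixP => r; rewrite row0; set w := row r _.
have hw : w *m lmul_mx i = 0 by rewrite /w -row_mul mulmx_ker row0.
have hg := dhomog_std_poly w.
have := in_ideal_sub_std d (dhomog_lmul hg).
rewrite std_coords_lmul std_polyK hw std_poly0 subr0 => /(hi _ hg).
by move/(std_coords_in_ideal i); rewrite std_polyK.
Qed.

Lemma lmul_surj_rank i : lmul_surj i -> \rank (lmul_mx i) = nstd i.+1.
Proof.
move=> hs; apply/eqP; rewrite -/(row_full _) -sub1mx; apply/row_subP => r.
have [g [hg hi]] := hs _ (dhomog_std_poly (row r 1%:M)).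
have := std_coords_in_ideal i.+1 hi.
rewrite std_coordsB std_polyK std_coords_lmul => /eqP; rewrite subr_eq0 => /eqP ->.
exact: submxMl.
Qed.

Lemma lmul_hits0 i : lmul_hits i 0.
Proof. by exists 0; rewrite dhomog0 mulr0 subr0; split => //; apply: in_ideal0. Qed.

Lemma lmul_hitsD i u v : lmul_hits i u -> lmul_hits i v -> lmul_hits i (u + v).
Proof.
move=> [g [hg hu]] [g' [hg' hv]]; exists (g + g'); split; first exact: rpredD.
have -> : u + v - l * (g + g') = (u - l * g) + (v - l * g').
  by rewrite mulrDr opprD !addrA (addrAC u v).
exact: in_idealD.
Qed.

Lemma lmul_hitsZ i c u : lmul_hits i u -> lmul_hits i (c *: u).
Proof.
move=> [g [hg hu]]; exists (c *: g); split; first exact: rpredZ.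
by rewrite -scalerAr -scalerBr; apply: in_idealZ.
Qed.

(* Surjectivity propagates upwards because every monomial of degree i+2 is
   a variable times a monomial of degree i+1. *)
Lemma lmul_surjS i : lmul_surj i -> lmul_surj i.+1.
Proof.
move=> hs h hh; rewrite (mpolyE h) big_seq.
elim/big_ind: _ => [|u v|a ha]; [exact: lmul_hits0 | exact: lmul_hitsD |].
apply: lmul_hitsZ; have da : mdeg a = i.+2 := dhomog_mf hh ha.
have [j hj] : exists j, a j != 0%N.
  apply/existsP; apply: contraT; rewrite negb_exists => /forallP h0.
  suff : mdeg a = 0%N by rewrite da.
  by rewrite mdegE big1 // => t _; apply/eqP/negPn/h0.
have le : (U_(j) <= a)%MM by rewrite lep1mP.
have ha' : ('X_[(a - U_(j))%MM] : S) \is i.+1.-homog.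
  rewrite dhomogX; apply/eqP; have := congr1 mdeg (submK le).
  by rewrite mdegD mdeg1 da addn1 => -[].
have [g [hg hi]] := hs _ ha'.
exists ('X_j * g); split; first by have := dhomogM (dhomogXU _ j) hg; rewrite add1n.
rewrite -(submK le) mpolyXD (mulrC _ 'X_[U_(j)]) mulrCA -mulrBr.
exact: in_idealMl.
Qed.

Lemma lmul_surj_ge j i : lmul_surj j -> (j <= i)%N -> lmul_surj i.
Proof.
move=> hj; elim: i => [|i IH]; first by rewrite leqn0 => /eqP <-.
rewrite leq_eqVlt => /orP [/eqP <- //|]; rewrite ltnS => /IH.
exact: lmul_surjS.
Qed.

End LinearFormMultiplication.

Section StandardCount.
Variables (N : nat) (d : 'I_N -> nat).

Definition std_hilb_poly : {poly int} := \prod_(j < N) \sum_(a < d j) 'X^a.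

Lemma nstd_coef i : (nstd d i)%:Z = std_hilb_poly`_i.
Proof.
have hB j : (d j <= (exp_bound d).+1)%N.
  by apply: leqW; rewrite /exp_bound (bigD1 j) //= leq_addr.
have -> : std_hilb_poly =
    \prod_(j < N) \sum_(a < (exp_bound d).+1 | (a < d j)%N) 'X^a.
  apply: eq_bigr => j _.
  exact: (big_ord_widen_cond _ (fun _ => true) (fun a => 'X^a) (hB j)).
rewrite (bigA_distr_big_dep (fun j (a : 'I_(exp_bound d).+1) => (a < d j)%N) (fun _ a => 'X^a)).
under eq_bigr do rewrite prodrXr.
rewrite coef_sum.
under eq_bigr do rewrite coefXn.
rewrite (eq_bigr (fun f : bexp d => if i == (\sum_j (f j : nat))%N then 1 else 0)); last first.
  by move=> f _; case: eqP.
rewrite -big_mkcondr /= sumr_const pmulrn intz /nstd; congr Posz.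
apply: eq_card => f; rewrite !inE.
have -> : mdeg (mnm_of_bexp f) = (\sum_j f j)%N.
  by rewrite mdegE; apply: eq_bigr => j _; rewrite mnmE.
rewrite eq_sym; congr (_ && _).
by apply/forallP/familyP => h j; have := h j; rewrite /= ?mnmE.
Qed.

Lemma num_poly_1subX : num_poly d = (1 - 'X) ^+ N * std_hilb_poly.
Proof.
have -> : (1 - 'X) ^+ N = \prod_(j < N) (1 - 'X : {poly int}).
  by rewrite prodr_const card_ord.
rewrite /num_poly /std_hilb_poly -big_split /=.
apply: eq_bigr => j _; rewrite -{1}(expr1n _ (d j)) subrXX; congr (_ * _).
by apply: eq_bigr => a _; rewrite expr1n mul1r.
Qed.

End StandardCount.

Lemma hockey_stick_conv K (a : nat -> int) i :
  \sum_(j < i.+1) a j * ('C((i - j) + K, i - j))%:Z =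
  \sum_(l < i.+1) \sum_(j < l.+1) a j * ('C((l - j) + K - 1, l - j))%:Z.
Proof.
elim: i => [|i IH]; first by rewrite !big_ord1 /= !bin0.
rewrite [RHS]big_ord_recr /= -IH [LHS]big_ord_recr [X in _ = _ + X]big_ord_recr /=.
rewrite !subnn !bin0 [RHS]addrA; congr (_ + _).
rewrite -big_split /=; apply: eq_bigr => j _; have hj : (j <= i)%N by rewrite -ltnS.
by rewrite subSn // addSn binS PoszD mulrDr addrC subn1.
Qed.

Lemma sum_coef_1subXM (Q : {poly int}) i : \sum_(l < i.+1) ((1 - 'X) * Q)`_l = Q`_i.
Proof.
elim: i => [|i IH]; first by rewrite big_ord1 mulrBl mul1r coefB coefXM /= subr0.
by rewrite big_ord_recr /= IH mulrBl mul1r coefB coefXM /= addrC subrK.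
Qed.

(* The coefficients of 1/(1 - t)^K are the binomials 'C(e + K - 1, e). *)
Lemma sum_binom_coef_1subXnM K (Q : {poly int}) i :
  \sum_(j < i.+1) ((1 - 'X) ^+ K * Q)`_j * ('C((i - j) + K - 1, i - j))%:Z = Q`_i.
Proof.
elim: K Q i => [|K IH] Q i.
  rewrite expr0 mul1r big_ord_recr /= subnn bin0 mulr1 big1 ?add0r // => j _.
  have : (0 < i - j)%N by rewrite subn_gt0.
  by rewrite addn0; case: (i - j)%N => //= e _; rewrite subn1 bin_small ?mulr0.
rewrite exprSr -mulrA.
under eq_bigr do rewrite addnS subn1 /=.
by rewrite hockey_stick_conv -[RHS]sum_coef_1subXM; apply: eq_bigr => l _; apply: IH.
Qed.

Lemma ratio_coef_nstd n (d : 'I_n.+1 -> nat) i :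
  ratio_coef n d i = (nstd d i)%:Z - (if i is i'.+1 then (nstd d i')%:Z else 0).
Proof.
rewrite /ratio_coef num_poly_1subX exprSr -mulrA sum_binom_coef_1subXnM.
rewrite mulrBl mul1r coefB coefXM !nstd_coef.
by case: i => // i; rewrite nstd_coef.
Qed.

Section Elimination.
Variables (k : fieldType) (n : nat) (m : 'I_n.+1) (lam : 'I_n.+1 -> k).
Local Notation N := n.+1.
Local Notation S := {mpoly k[N]}.
Local Notation R := {mpoly k[n]}.

Definition lform : S := \sum_(j < N) lam j *: 'X_j.

(* Substituting [elim_tuple] solves [lform = 0] for [x_m] and renumbers the
   remaining variables; [incl_tuple] is the inclusion of [k[x_j, j != m]]. *)
Definition elim_var (j : 'I_N) : R :=
  if unlift m j is Some s then 'X_s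
  else - (lam m)^-1 *: \sum_(s < n) lam (lift m s) *: 'X_s.
Definition elim_tuple : N.-tuple R := [tuple elim_var j | j < N].
Definition incl_tuple : n.-tuple S := [tuple 'X_(lift m s) | s < n].

Lemma dhomog_lform : lform \is 1.-homog.
Proof. by apply: rpred_sum => j _; apply/rpredZ/dhomogXU. Qed.

Lemma elim_tuple_homog j : tnth elim_tuple j \is 1.-homog.
Proof.
rewrite tnth_mktuple /elim_var; case: unliftP => [s _|_]; first exact: dhomogXU.
by apply/rpredZ/rpred_sum => s _; apply/rpredZ/dhomogXU.
Qed.

Lemma incl_tuple_homog j : tnth incl_tuple j \is 1.-homog.
Proof. by rewrite tnth_mktuple; apply: dhomogXU. Qed.

Lemma comp_incl_elim (q : R) : (q \mPo incl_tuple) \mPo elim_tuple = q.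
Proof.
rewrite comp_mpolyA -[RHS]comp_mpoly_id; congr (_ \mPo _).
apply: eq_from_tnth => s; rewrite !tnth_mktuple comp_mpolyXt tnth_mktuple /elim_var.
by rewrite liftK.
Qed.

Lemma lform_split :
  lform = lam m *: 'X_m + \sum_(s < n) lam (lift m s) *: 'X_(lift m s).
Proof. by rewrite /lform (bigD1_ord m). Qed.

Hypothesis hm : lam m != 0.

Lemma comp_lform_elim : lform \mPo elim_tuple = 0.
Proof.
rewrite lform_split raddfD /= !comp_mpolyZ !comp_mpolyXt raddf_sum /=.
rewrite tnth_mktuple /elim_var unlift_none scalerA mulrN mulfV // scaleN1r.
under eq_bigr do rewrite comp_mpolyZ comp_mpolyXt tnth_mktuple /elim_var liftK.
by rewrite addNr.
Qed.

Lemma in_lform_ideal_sub_comp (v : S) :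
  in_ideal (fun _ : 'I_1 => lform) (v - ((v \mPo elim_tuple) \mPo incl_tuple)).
Proof.
rewrite -opprB; apply/in_idealN; rewrite comp_mpolyA; apply: in_ideal_compB => j.
rewrite !tnth_mktuple /elim_var; case: unliftP => [s ->|->].
  by rewrite comp_mpolyXt tnth_mktuple subrr; apply: in_ideal0.
rewrite comp_mpolyZ comp_mpoly_sum.
under eq_bigr do rewrite comp_mpolyZ comp_mpolyXt tnth_mktuple.
have -> : \sum_(s < n) lam (lift m s) *: ('X_(lift m s) : S) = lform - lam m *: 'X_m.
  by rewrite lform_split addrAC subrr add0r.
rewrite scalerBr scalerA mulNr mulVf // scaleN1r opprK addrK.
exact/in_idealZ/(in_ideal_gen _ ord0).
Qed.

End Elimination.

Section EliminatedCompleteIntersection.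
Variables (k : fieldType) (n : nat) (d : 'I_n.+1 -> nat).
Variables (m : 'I_n.+1) (lam : 'I_n.+1 -> k).
Hypothesis hm : lam m != 0.
Local Notation N := n.+1.
Local Notation S := {mpoly k[N]}.
Local Notation R := {mpoly k[n]}.
Local Notation I := (monomial_ci k d).
Local Notation l := (lform lam).
Local Notation elim_tuple := (elim_tuple m lam).
Local Notation incl_tuple := (incl_tuple k m).

Definition elim_ci (j : 'I_N) : R := I j \mPo elim_tuple.

Lemma dhomog_elim_ci j : elim_ci j \is (d j).-homog.
Proof.
apply: comp_dhomog; last exact: elim_tuple_homog.
by have := dhomogMn (d j) (dhomogXU k j); rewrite mul1n.
Qed.

Lemma in_ideal_comp_elim u : in_ideal I u -> in_ideal elim_ci (u \mPo elim_tuple).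
Proof.
move=> [g ->]; exists (fun j => g j \mPo elim_tuple).
by rewrite comp_mpoly_sum; apply: eq_bigr => j _; rewrite rmorphM.
Qed.

Lemma in_ideal_adjoinP u :
  in_ideal_adjoin d l u <-> in_ideal elim_ci (u \mPo elim_tuple).
Proof.
split=> [[g /in_ideal_comp_elim] | [h hu]].
  by rewrite rmorphB rmorphM /= comp_lform_elim // mul0r subr0.
set v := u - \sum_j (h j \mPo incl_tuple) * I j.
have hv : v \mPo elim_tuple = 0.
  rewrite rmorphB /= comp_mpoly_sum hu; apply/eqP; rewrite subr_eq0; apply/eqP.
  by apply: eq_bigr => j _; rewrite rmorphM /= comp_incl_elim.
have [g] := in_lform_ideal_sub_comp hm v.
rewrite hv comp_mpoly0 subr0 big_ord1 => hg; exists (g ord0).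
rewrite mulrC -hg /v opprB addrC subrK.
by exists (fun j => h j \mPo incl_tuple).
Qed.

Lemma hilb_fun_elim_ci i p (L : 'M[k]_(p, nstd d i)) :
  (forall g, (std_coords d i (l * g) <= L)%MS) ->
  (forall w : 'rV_p, in_ideal_adjoin d l (std_poly (w *m L))) ->
  hilb_fun_is elim_ci i (\rank (L^C)%MS).
Proof.
move=> h1 h2; have [hind hspan] := quotient_basis h1 h2.
set B := row_base _ in hind hspan.
pose b j := std_poly (row j B) \mPo elim_tuple.
have hsum (c : 'rV[k]_(\rank (L^C)%MS)) :
    \sum_j c 0 j *: b j = std_poly (c *m B) \mPo elim_tuple.
  rewrite mulmx_sum_row (big_morph _ (@std_polyD _ _ _ _) (std_poly0 _ _ _)).
  by rewrite comp_mpoly_sum; apply: eq_bigr => j _; rewrite std_polyZ comp_mpolyZ.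
exists b; split.
- by move=> j; apply: comp_dhomog; [apply: dhomog_std_poly | apply: elim_tuple_homog].
- move=> c hc j; pose c' := \row_j0 c j0.
  suff : c' = 0 by move/rowP/(_ j); rewrite !mxE.
  apply/hind/in_ideal_adjoinP; rewrite -hsum.
  by under eq_bigr do rewrite mxE.
- move=> h hh.
  have hi : h \mPo incl_tuple \is i.-homog.
    by apply: comp_dhomog => //; apply: incl_tuple_homog.
  have [c /in_ideal_adjoinP] := hspan _ hi.
  by rewrite rmorphB /= comp_incl_elim -hsum; exists (c 0).
Qed.

End EliminatedCompleteIntersection.

Section LefschetzRanks.
Variables (k : fieldType) (n : nat) (d : 'I_n.+1 -> nat) (l : {mpoly k[n.+1]}).
Hypothesis hl : l \is 1.-homog.
Hypothesis wlp : forall i, lmul_inj d l i \/ lmul_surj d l i.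

Lemma trunc_ratio_coef0 : trunc_coef (ratio_coef n d) 0 = (nstd d 0)%:Z.
Proof.
have r0 : ratio_coef n d 0 = (nstd d 0)%:Z by rewrite ratio_coef_nstd subr0.
by rewrite /trunc_coef r0; case: ifP => // /negbT /forallPn [j]; rewrite (ord1 j) r0.
Qed.

(* While multiplication by [l] is injective the rank is [nstd d i] and the
   ratio coefficients [nstd d i.+1 - nstd d i] are nonnegative; the first
   negative one forces surjectivity from then on. *)
Lemma trunc_ratio_coefS i :
  trunc_coef (ratio_coef n d) i.+1 = (nstd d i.+1 - \rank (lmul_mx d l i))%N%:Z.
Proof.
rewrite /trunc_coef.
have rr := rank_leq_row (lmul_mx d l i); have rc := rank_leq_col (lmul_mx d l i).
case: ifP => [/forallP hpos | /negbT /forallPn [[[|j] hj]]] /=.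
  have := hpos ord_max; rewrite /= ratio_coef_nstd => ha.
  by case: (wlp i) => [/(lmul_inj_rank hl) | /(lmul_surj_rank hl)] e; lia.
  by rewrite ratio_coef_nstd subr0.
rewrite ratio_coef_nstd => hneg.
case: (wlp j) => [/(lmul_inj_rank hl) hr | hs].
  by have := rank_leq_col (lmul_mx d l j); rewrite hr; lia.
by rewrite (lmul_surj_rank hl (lmul_surj_ge hs _)) ?subnn // -ltnS.
Qed.

End LefschetzRanks.

Lemma hilb_fun_elim_ci_trunc (k : fieldType) n (d : 'I_n.+1 -> nat)
    (m : 'I_n.+1) (lam : 'I_n.+1 -> k) :
  lam m != 0 ->
  (forall i, lmul_inj d (lform lam) i \/ lmul_surj d (lform lam) i) ->
  forall i, exists r, hilb_fun_is (elim_ci d m lam) i r /\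
                      r%:Z = trunc_coef (ratio_coef n d) i.
Proof.
move=> hm wlp [|i].
  have [h1 h2] := lmul_image_deg0 d (dhomog_lform lam).
  exists (\rank ((0 : 'M[k]_(0, nstd d 0))^C)%MS); split; first exact: hilb_fun_elim_ci.
  by rewrite trunc_ratio_coef0 mxrank_compl mxrank0 subn0.
have [h1 h2] := lmul_mx_image d (dhomog_lform lam) i.
exists (\rank ((lmul_mx d (lform lam) i)^C)%MS); split; first exact: hilb_fun_elim_ci.
by rewrite (trunc_ratio_coefS (dhomog_lform lam) wlp) mxrank_compl.
Qed.

(* A Lefschetz form may be taken with a nonzero coefficient: if [0] is one,
   multiplication by [0] is surjective in degree [0] (it is not injective,
   as [1] is not in the ideal), so every form of positive degree lies in the
   ideal and every linear form is a Lefschetz form. *)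
Lemma has_WLP_lform (k : fieldType) n (d : 'I_n.+1 -> nat) :
  (forall j, (0 < d j)%N) -> has_WLP (monomial_ci k d) ->
  exists m (lam : 'I_n.+1 -> k), lam m != 0 /\
    forall i, lmul_inj d (lform lam) i \/ lmul_surj d (lform lam) i.
Proof.
move=> hd [l [hl wlp]].
case: (pickP (fun j => l@_U_(j) != 0)) => [m hm | h0].
  by exists m, (fun j => l@_U_(j)); rewrite /lform -dhomog1E.
have l0 : l = 0.
  rewrite (dhomog1E hl) big1 // => j _.
  by move/negbT: (h0 j); rewrite negbK => /eqP ->; rewrite scale0r.
have surj0 : lmul_surj d l 0.
  case: (wlp 0%N) => // /(_ 1 (dhomog1 _ _)); rewrite l0 mul0r => /(_ (in_ideal0 _)).
  have std0 : standard d 0%MM by apply/forallP => j; rewrite mnm0E hd.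
  by move/mcoeff_in_ideal_std/(_ std0)/eqP; rewrite mcoeff1 eqxx oner_eq0.
exists ord0, (fun j => (j == ord0)%:R); split; first by rewrite eqxx oner_eq0.
move=> i; right => h hh; exists 0; split; first exact: dhomog0.
have [g [_]] := lmul_surj_ge surj0 (leq0n i) hh.
by rewrite l0 !mul0r mulr0.
Qed.

Theorem theorem4p17 (k : fieldType) (p : nat) (hp : p \in [pchar k])
  (n : nat) (d : 'I_n.+1 -> nat) (hd : forall j, (0 < d j)%N) :
  has_WLP (monomial_ci k d) ->
  exists f : 'I_n.+1 -> {mpoly k[n]},
    (forall j, f j \is (d j).-homog) /\
    (forall i : nat, exists r : nat,
        hilb_fun_is f i r /\ r%:Z = trunc_coef (ratio_coef n d) i).
Proof.
move=> /(has_WLP_lform hd) [m [lam [hm wlp]]].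
exists (elim_ci d m lam); split; first exact: dhomog_elim_ci.
exact: hilb_fun_elim_ci_trunc.
Qed.
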